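(* Consider FULLSET MALIQUOT. Then $\mathcal{SG}(n)\in\{0,1\}$, and $\mathcal{SG}(n)=1$ if and only if $n>1$ is square-free.
   Context: FULLSET MALIQUOT is the impartial normal-play game on positive integers where the single option from a heap $n>1$ is the disjunctive sum of all proper divisors of $n$ (all $d\mid n$ with $1\le d<n$); a heap of size $1$ is terminal. $\mathcal{SG}$ denotes the Sprague-Grundy value (mex rule, nim-sum). *)

From mathcomp Require Import all_boot.
From Stdlib Require PeanoNat.
Set Implicit Arguments. Unset Strict Implicit. Unset Printing Implicit Defensive.

Definition nimsum (a b : nat) : nat := Nat.lxor a b.

Definition mex (s : seq nat) : nat := find (fun k => k \notin s) (iota 0 (size s).+1).

Definition proper_divisors (n : nat) : seq nat := [seq d <- divisors n | d < n].

(* For n > 1 the unique option is the disjunctive sum of the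
   heaps d, d a proper divisor of n; its SG value is the nim-sum of their SG
   values, and SG n is the mex of the singleton set of option values. *)
Fixpoint sg_fuel (k n : nat) : nat :=
  match k with
  | 0 => 0
  | k'.+1 =>
      if n <= 1 then 0
      else mex [:: foldr nimsum 0 [seq sg_fuel k' d | d <- proper_divisors n]]
  end.

(* fuel n suffices: each recursive call goes to a strictly smaller heap *)
Definition sg (n : nat) : nat := sg_fuel n n.

Definition squarefree (n : nat) : Prop := forall p, prime p -> ~~ (p * p %| n).

From mathcomp Require Import all_boot.

(* By strong induction SG(d) = [d > 1 squarefree] for every d < n, so the
   option of n > 1 has SG value the parity of the number of squarefree
   divisors d of n with 1 < d < n.  The squarefree divisors of n > 1 pair off
   as d <-> d * p, p a fixed prime factor, so there is an even number of
   them; removing 1 and possibly n leaves an odd count exactly when n is not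
   squarefree.  The mex of the single option value is then 1 iff n is
   squarefree. *)

Definition squarefreeb (n : nat) : bool :=
  all (fun p => ~~ (p * p %| n)) (primes n).

Lemma squarefreeP {n} : 0 < n -> reflect (squarefree n) (squarefreeb n).
Proof.
move=> n_gt0; apply: (iffP allP) => [sqf_n p p_pr | sqf_n p].
  apply/negP => pp_dvd_n; have : p \in primes n.
    by rewrite mem_primes p_pr n_gt0 (dvdn_trans (dvdn_mulr p (dvdnn p))).
  by move/sqf_n; rewrite pp_dvd_n.
by rewrite mem_primes => /and3P[p_pr _ _]; apply: sqf_n.
Qed.

Lemma squarefreeb_dvd {d n} : 0 < n -> d %| n -> squarefreeb n -> squarefreeb d.
Proof.
move=> n_gt0 d_dvd_n /(squarefreeP n_gt0) sqf_n.
apply/(squarefreeP (dvdn_gt0 n_gt0 d_dvd_n)) => p p_pr; apply/negP => pp_dvd_d.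
by move: (sqf_n p p_pr); rewrite (dvdn_trans pp_dvd_d d_dvd_n).
Qed.

Lemma squarefreeb_mul_prime d p :
  0 < d -> prime p -> ~~ (p %| d) -> squarefreeb d -> squarefreeb (d * p).
Proof.
move=> d_gt0 p_pr p_ndvd_d /(squarefreeP d_gt0) sqf_d.
have p_gt0 := prime_gt0 p_pr.
apply/squarefreeP; first by rewrite muln_gt0 d_gt0.
move=> q q_pr; apply/negP; case: (eqVneq q p) => [-> | q_neq_p].
  by rewrite dvdn_pmul2r // => p_dvd_d; rewrite p_dvd_d in p_ndvd_d.
have qq_coprime_p : coprime (q * q) p.
  by rewrite coprimeMl (prime_coprime _ q_pr) dvdn_prime2 // q_neq_p.
by rewrite Gauss_dvdl // => qq_dvd_d; move: (sqf_d q q_pr); rewrite qq_dvd_d.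
Qed.

Lemma squarefreeb_ndvd_divp d p :
  0 < d -> prime p -> p %| d -> squarefreeb d -> ~~ (p %| d %/ p).
Proof.
move=> d_gt0 p_pr p_dvd_d /(squarefreeP d_gt0)/(_ p p_pr).
by apply: contra; rewrite -{2}(divnK p_dvd_d) dvdn_pmul2r ?prime_gt0.
Qed.

Lemma perm_squarefree_divisors_dvd {n p} :
  0 < n -> prime p -> p %| n ->
  perm_eq [seq d <- [seq d <- divisors n | squarefreeb d] | p %| d]
          [seq d * p | d <- [seq d <- divisors n | squarefreeb d] & ~~ (p %| d)].
Proof.
move=> n_gt0 p_pr p_dvd_n; set S := [seq d <- divisors n | squarefreeb d].
have p_gt0 := prime_gt0 p_pr.
have S_uniq : uniq S := filter_uniq _ (divisors_uniq n).
apply: uniq_perm; first exact: filter_uniq.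
  rewrite map_inj_uniq; first exact: filter_uniq.
  by move=> x y /eqP; rewrite eqn_pmul2r // => /eqP.
move=> x; rewrite !mem_filter -dvdn_divisors //; apply/idP/mapP.
  case/and3P=> p_dvd_x sqf_x x_dvd_n; have x_gt0 := dvdn_gt0 n_gt0 x_dvd_n.
  exists (x %/ p); last by rewrite divnK.
  have xp_dvd_n := dvdn_trans (dvdn_div p_dvd_x) x_dvd_n.
  rewrite !mem_filter -dvdn_divisors // xp_dvd_n andbT.
  by rewrite squarefreeb_ndvd_divp // (squarefreeb_dvd x_gt0 (dvdn_div p_dvd_x)).
case=> d; rewrite !mem_filter -dvdn_divisors // => /and3P[p_ndvd_d sqf_d d_dvd_n] ->.
have d_gt0 := dvdn_gt0 n_gt0 d_dvd_n.
rewrite dvdn_mull // squarefreeb_mul_prime //= Gauss_dvd ?d_dvd_n ?p_dvd_n //.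
by rewrite coprime_sym prime_coprime.
Qed.

Lemma count_squarefree_divisors_even {n} :
  1 < n -> ~~ odd (count squarefreeb (divisors n)).
Proof.
move=> n_gt1; have p_pr := pdiv_prime n_gt1.
rewrite -size_filter -(count_predC (fun d => pdiv n %| d)) -!size_filter.
rewrite (perm_size (perm_squarefree_divisors_dvd (ltnW n_gt1) p_pr (pdiv_dvd n))).
by rewrite size_map addnn odd_double.
Qed.

Lemma perm_divisors_proper {n} :
  1 < n -> perm_eq (divisors n) (1 :: n :: [seq d <- proper_divisors n | 1 < d]).
Proof.
move=> n_gt1; have n_gt0 := ltnW n_gt1.
apply: uniq_perm; first exact: divisors_uniq.
  rewrite /= inE eq_sym (gtn_eqF n_gt1) !mem_filter !ltnn /= andbF.
  exact: filter_uniq (filter_uniq _ (divisors_uniq n)).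
move=> d; rewrite !inE !mem_filter -dvdn_divisors //.
apply/idP/idP => [d_dvd_n | ]; last first.
  by case/or3P=> [/eqP-> | /eqP-> | /and3P[]//]; rewrite ?dvd1n ?dvdnn.
have d_gt0 := dvdn_gt0 n_gt0 d_dvd_n.
case: (eqVneq d 1) => //= d_neq1; case: (eqVneq d n) => //= d_neq_n.
rewrite d_dvd_n [1 < d]ltn_neqAle [d < n]ltn_neqAle (eq_sym 1) d_neq1 d_neq_n.
by rewrite d_gt0 (dvdn_leq n_gt0 d_dvd_n).
Qed.

Lemma odd_count_squarefree_proper_divisors n : 1 < n ->
  odd (count (fun d => (1 < d) && squarefreeb d) (proper_divisors n)) =
  ~~ squarefreeb n.
Proof.
move=> n_gt1; have := count_squarefree_divisors_even n_gt1.
rewrite (permP (perm_divisors_proper n_gt1)) /= add0n negbK count_filter.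
rewrite (@eq_count _ _ (fun d => (1 < d) && squarefreeb d)); last first.
  by move=> d; exact: andbC.
by rewrite oddD oddb; case: squarefreeb; case: (odd _).
Qed.

Lemma foldr_nimsum_bits (T : Type) (P : pred T) s :
  foldr nimsum 0 [seq nat_of_bool (P x) | x <- s] = odd (count P s).
Proof.
by elim: s => //= x s ->; rewrite oddD oddb; case: (P x); case: (odd _).
Qed.

Lemma mex_seq1 x : mex [:: x] = (x == 0).
Proof. by case: x. Qed.

Lemma sg_fuelE k n : n <= k -> sg_fuel k n = (1 < n) && squarefreeb n.
Proof.
elim: k n => [|k IHk] n /=; first by rewrite leqn0 => /eqP->.
move=> n_le_k1; case: leqP => // n_gt1 /=.
have -> : [seq sg_fuel k d | d <- proper_divisors n] =
          [seq nat_of_bool ((1 < d) && squarefreeb d) | d <- proper_divisors n].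
  apply/eq_in_map => d; rewrite mem_filter => /andP[d_lt_n _]; apply: IHk.
  by rewrite -ltnS (leq_trans d_lt_n).
rewrite foldr_nimsum_bits mex_seq1 odd_count_squarefree_proper_divisors //.
by case: squarefreeb.
Qed.

Theorem mainTheorem14 (n : nat) (hn : 0 < n) :
  (sg n = 0 \/ sg n = 1) /\ (sg n = 1 <-> 1 < n /\ squarefree n).
Proof.
rewrite /sg sg_fuelE //; case: ltnP => [n_gt1 | n_le1] /=; last first.
  by split; [left | split => // -[]].
case: (squarefreeP hn) => [sqf_n | nsqf_n] /=.
  by split; [right | split].
by split; [left | split => // -[_ /nsqf_n]].
Qed.
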